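(* Let $g$ be the Lorentzian form on $\mathbb{R}^4$ with matrix $\mathrm{diag}(1,1,1,-c^2)$. For a timelike vector $u$ let $R_u$ be the equivalence relation on $\mathbb{R}^4$ defined by $x\,R_u\,y\iff g(x-y,u)=0$. If $u_1,u_2$ are non-proportional future timelike vectors, then the smallest equivalence relation containing $R_{u_1}\cup R_{u_2}$ is the total relation $\mathbb{R}^4\times\mathbb{R}^4$.
   Context: A vector $u$ is timelike if $g(u,u)<0$, and future timelike if moreover its fourth component is positive. *)

From HB Require Import structures.
From mathcomp Require Import all_boot all_order all_algebra.
From mathcomp Require Import reals.
From Stdlib Require Import Relations.Relation_Operators.
Set Implicit Arguments. Unset Strict Implicit. Unset Printing Implicit Defensive.
Import Order.TTheory GRing.Theory Num.Theory.
Local Open Scope ring_scope.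

(* Vectors of R^4 are row vectors 'rV[R]_4; components indexed 0..3, the
   "fourth component" is index 3 (the time coordinate). *)

Definition lorentz (R : realFieldType) (c : R) (x y : 'rV[R]_4) : R :=
  x 0 0 * y 0 0 + x 0 1 * y 0 1 + x 0 2 * y 0 2 - c ^+ 2 * (x 0 3 * y 0 3).

Definition timelike (R : realFieldType) (c : R) (u : 'rV[R]_4) : Prop :=
  lorentz c u u < 0.

Definition future_timelike (R : realFieldType) (c : R) (u : 'rV[R]_4) : Prop :=
  timelike c u /\ 0 < u 0 3.

Definition Rel_u (R : realFieldType) (c : R) (u : 'rV[R]_4) (x y : 'rV[R]_4)
  : Prop := lorentz c (x - y) u = 0.

Definition proportional (R : realFieldType) (u1 u2 : 'rV[R]_4) : Prop :=
  exists a : R, u1 = a *: u2 \/ u2 = a *: u1.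

Definition rel_union (T : Type) (r1 r2 : T -> T -> Prop) : T -> T -> Prop :=
  fun x y => r1 x y \/ r2 x y.

Definition equiv_closure (T : Type) (r : T -> T -> Prop) : T -> T -> Prop :=
  clos_refl_sym_trans T r.

(* Any x and y are joined in two steps, x R_{u1} x + t v R_{u2} y, as soon as
   some v is g-orthogonal to u1 but not to u2.  Such a v exists among the
   vectors (c^2 u1_3 e_i, u1_i), i < 3, which are orthogonal to u1 and pair
   with u2 to c^2 times the minors u1_3 u2_i - u1_i u2_3; if all these minors
   vanished, u2 would be the multiple (u2_3 / u1_3) u1 of u1. *)
From HB Require Import structures.
From mathcomp Require Import all_boot all_order all_algebra.
From mathcomp Require Import reals.
From mathcomp Require Import ring.
From Stdlib Require Import Relations.Relation_Operators.
Set Implicit Arguments. Unset Strict Implicit. Unset Printing Implicit Defensive.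
Import Order.TTheory GRing.Theory Num.Theory.
Local Open Scope ring_scope.

Section LorentzForm.
Variables (R : realFieldType) (c : R).

Lemma lorentzBl (x y u : 'rV[R]_4) :
  lorentz c (x - y) u = lorentz c x u - lorentz c y u.
Proof. rewrite /lorentz !mxE; ring. Qed.

Lemma lorentzDZl (t : R) (x v u : 'rV[R]_4) :
  lorentz c (x + t *: v) u = lorentz c x u + t * lorentz c v u.
Proof. rewrite /lorentz !mxE; ring. Qed.

Lemma equiv_closure_Rel_u_total (u1 u2 v : 'rV[R]_4) :
  lorentz c v u1 = 0 -> lorentz c v u2 != 0 ->
  forall x y : 'rV[R]_4, equiv_closure (rel_union (Rel_u c u1) (Rel_u c u2)) x y.
Proof.
move=> v_u1 v_u2 x y.
pose t := (lorentz c y u2 - lorentz c x u2) / lorentz c v u2.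
apply: (rst_trans _ _ _ (x + t *: v)); apply: rst_step.
  by left; rewrite /Rel_u lorentzBl lorentzDZl v_u1; ring.
by right; rewrite /Rel_u lorentzBl lorentzDZl /t; field.
Qed.

Definition spatial_orth (u : 'rV[R]_4) (i : 'I_4) : 'rV[R]_4 :=
  \row_k (if k == 3 then u 0 i else if k == i then c ^+ 2 * u 0 3 else 0).

Lemma lorentz_spatial_orth (u w : 'rV[R]_4) (i : 'I_4) : i != 3 ->
  lorentz c (spatial_orth u i) w = c ^+ 2 * (u 0 3 * w 0 i - u 0 i * w 0 3).
Proof.
rewrite /lorentz /spatial_orth !mxE.
case: i => [[|[|[|[|i]]]] Hi] //= _.
- have -> : Ordinal Hi = 0 by apply: val_inj.
  rewrite /=; ring.
- have -> : Ordinal Hi = 1 by apply: val_inj.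
  rewrite /=; ring.
- have -> : Ordinal Hi = 2 by apply: val_inj.
  rewrite /=; ring.
Qed.

Lemma lorentz_spatial_orth_self (u : 'rV[R]_4) (i : 'I_4) : i != 3 ->
  lorentz c (spatial_orth u i) u = 0.
Proof. by move=> /lorentz_spatial_orth ->; ring. Qed.

End LorentzForm.

Lemma proportional_of_minors (R : fieldType) (u w : 'rV[R]_4) : u 0 3 != 0 ->
  (forall i : 'I_4, i != 3 -> u 0 3 * w 0 i - u 0 i * w 0 3 = 0) ->
  w = (w 0 3 / u 0 3) *: u.
Proof.
move=> u3 minor0; apply/rowP => k; rewrite !mxE.
have [->|k3] := eqVneq k 3; first by rewrite divfK.
by move/eqP: (minor0 k k3); rewrite subr_eq0 => /eqP minor; field: minor.
Qed.

Theorem proposition3p10 (R : realType) (c : R) (hc : 0 < c)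
  (u1 u2 : 'rV[R]_4) :
  future_timelike c u1 -> future_timelike c u2 -> ~ proportional u1 u2 ->
  forall x y : 'rV[R]_4, equiv_closure (rel_union (Rel_u c u1) (Rel_u c u2)) x y.
Proof.
move=> [_ u1_3_gt0] _ not_prop.
have u1_3 : u1 0 3 != 0 by rewrite gt_eqF.
have [/existsP[i /andP[i3 minor]]|no_minor] :=
  boolP [exists i : 'I_4, (i != 3) && (u1 0 3 * u2 0 i - u1 0 i * u2 0 3 != 0)].
  apply: (equiv_closure_Rel_u_total (v := spatial_orth c u1 i)).
    exact: lorentz_spatial_orth_self.
  by rewrite lorentz_spatial_orth // mulf_neq0 // expf_neq0 // gt_eqF.
exfalso; apply: not_prop; exists (u2 0 3 / u1 0 3); right.
apply: proportional_of_minors => // i i3; apply/eqP.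
by move: no_minor; rewrite negb_exists => /forallP/(_ i); rewrite i3 negbK.
Qed.
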